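(* Let $M$ be a complex manifold, $m\ge 1$, and let $\varphi_0,\dots,\varphi_m$ be smooth homogeneous complex-valued differential forms on $M$ of degrees $|\varphi_0|,\dots,|\varphi_m|$. Then $$ d\,\omega_m(\varphi_0,\dots,\varphi_m)=(-1)^m\,\partial\varphi_0\wedge\dots\wedge\partial\varphi_m+\overline\partial\varphi_0\wedge\dots\wedge\overline\partial\varphi_m+\frac{1}{m!}\,\mathrm{Alt}_{m+1}\Big((-1)^{|\varphi_0|}\,\overline\partial\partial\varphi_0\wedge\omega_{m-1}(\varphi_1,\dots,\varphi_m)\Big). $$
   Context: Here $d=\partial+\overline\partial$. For homogeneous forms $f_1,\dots,f_n$ and an expression $F(f_1,\dots,f_n)$ set $\mathrm{Alt}_nF(f_1,\dots,f_n):=\sum_{\sigma\in\Sigma_n}\mathrm{sgn}_{\sigma;f_1,\dots,f_n}F(f_{\sigma(1)},\dots,f_{\sigma(n)})$, where the sign of interchanging two of the forms $f_i,f_j$ is $(-1)^{(|f_i|+1)(|f_j|+1)}$ and the sign of a general permutation is the product of the signs of the transpositions composing it (i.e. the Koszul sign with respect to the shifted degrees $|f_i|+1$). Define $$ \omega_m(\varphi_0,\dots,\varphi_m):=\frac{1}{(m+1)!}\mathrm{Alt}_{m+1}\Big(\sum_{k=0}^m(-1)^k\varphi_0\wedge\partial\varphi_1\wedge\dots\wedge\partial\varphi_k\wedge\overline\partial\varphi_{k+1}\wedge\dots\wedge\overline\partial\varphi_m\Big), $$ with the alternation applied to the forms $\varphi_0,\dots,\varphi_m$ (not moving the differential operators);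 in particular $\omega_0(\varphi_0)=\varphi_0$. *)

From HB Require Import structures.
From mathcomp Require Import all_boot all_order all_algebra all_fingroup.
Set Implicit Arguments. Unset Strict Implicit. Unset Printing Implicit Defensive.
Import Order.TTheory GRing.Theory Num.Theory.
Local Open Scope ring_scope.

(* The algebra of smooth complex-valued differential forms on a complex
   manifold, abstracted: an R-algebra A (wedge product = ring product),
   with the predicate [homog p] of forms homogeneous of (total) degree p,
   and the operators del (= ∂) and delb (= ∂bar) satisfying the rules
   that hold for forms on any complex manifold. *)
Record cforms (R : numFieldType) (A : algType R) := CForms {
  homog : nat -> pred A;
  del : {linear A -> A};
  delb : {linear A -> A};
  hom0 : forall p, 0 \in homog p;
  homB : forall p x y, x \in homog p -> y \in homog p -> x - y \in homog p;
  homZ : forall p (a : R) x, x \in homog p -> a *: x \in homog p;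
  hom1 : 1 \in homog 0;
  homM : forall p q x y, x \in homog p -> y \in homog q -> x * y \in homog (p + q);
  hom_comm : forall p q x y, x \in homog p -> y \in homog q ->
    x * y = (-1) ^+ (p * q) *: (y * x);
  del_hom : forall p x, x \in homog p -> del x \in homog p.+1;
  delb_hom : forall p x, x \in homog p -> delb x \in homog p.+1;
  del_leibniz : forall p x y, x \in homog p ->
    del (x * y) = del x * y + (-1) ^+ p *: (x * del y);
  delb_leibniz : forall p x y, x \in homog p ->
    delb (x * y) = delb x * y + (-1) ^+ p *: (x * delb y);
  del_del : forall x, del (del x) = 0;
  delb_delb : forall x, delb (delb x) = 0;
  del_delb : forall x, del (delb x) + delb (del x) = 0
}.

Section Ops.
Variables (R : numFieldType) (A : algType R) (D : cforms A).

Definition dtot (x : A) : A := del D x + delb D x.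

(* Koszul sign of s with respect to the shifted degrees a i (= |f_i| + 1):
   product over inverted pairs of positions p < q (s p > s q) of
   (-1)^(a (s p) * a (s q)). *)
Definition koszul (n : nat) (a : 'I_n -> nat) (s : 'S_n) : R :=
  \prod_(p : 'I_n) \prod_(q : 'I_n | (p < q)%N && (s q < s p)%N)
     (-1) ^+ (a (s p) * a (s q)).

(* Alt_n F (f_1..f_n); the expression F may depend on the forms and on
   their degrees, k i being the degree of f i. *)
Definition Alt (n : nat) (F : ('I_n -> nat) -> ('I_n -> A) -> A)
    (k : 'I_n -> nat) (f : 'I_n -> A) : A :=
  \sum_(s : 'S_n) koszul (fun i => (k i).+1) s *:
      F (fun i => k (s i)) (fun i => f (s i)).

Definition omega_term (m : nat) (j : nat) (f : 'I_m.+1 -> A) : A :=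
  \prod_(i < m.+1)
     (if i == ord0 then f i else if (i <= j)%N then del D (f i) else delb D (f i)).

Definition omega (m : nat) (k : 'I_m.+1 -> nat) (f : 'I_m.+1 -> A) : A :=
  ((m.+1)`!%:R)^-1 *:
    Alt (fun _ g => \sum_(j < m.+1) (-1) ^+ j *: omega_term j g) k f.

End Ops.

(* Write omega_m = 1/(m+1)! Alt_(m+1) (sum_j (-1)^j T_j), where T_j(f) is the
   word f_0 del f_1 ... del f_j delb f_(j+1) ... delb f_m.  By the graded
   Leibniz rule, d = del + delb applied to T_j(f) gives three kinds of words:
   - from slot 0, the word P_(j+1) (del on slots 0..j, delb after) and the
     word Q_j (delb f_0, del on slots 1..j, delb after);
   - from a slot i >= 1, the word L_ij with delb del f_i in slot i, with a
     sign, because del del = delb delb = 0 and del delb = - delb del.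
   Under alternation Q_j equals P_j (move slot 0 behind slots 1..j), so the
   first kind telescopes to (-1)^m del f_0...del f_m + delb f_0...delb f_m.
   Moving delb del f_i to the front turns L_ij into a word of
   delb del f_0 * omega_(m-1)(f_1, ..., f_m), each of which arises m + 1
   times; this accounts for the passage from 1/(m+1)! to 1/m!. *)
From HB Require Import structures.
From mathcomp Require Import all_boot all_order all_algebra all_fingroup.
From mathcomp Require Import ring.
Import Order.TTheory GRing.Theory Num.Theory.
Local Open Scope ring_scope.
Set Implicit Arguments. Unset Strict Implicit. Unset Printing Implicit Defensive.

Section KoszulSign.
Variable R : numFieldType.
Local Notation sgn e := ((-1 : R) ^+ e).
Local Notation kos := (koszul R).

Lemma sgn_sqr e : sgn e * sgn e = 1.
Proof. by rewrite -expr2 sqrr_sign. Qed.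

Lemma sgn_odd_eq e e' : odd e = odd e' -> sgn e = sgn e'.
Proof. by move=> h; rewrite -signr_odd h signr_odd. Qed.

Lemma koszul_sqr n (a : 'I_n -> nat) s : kos a s * kos a s = 1.
Proof.
rewrite /koszul -big_split /=; apply: big1 => p _.
by rewrite -big_split /=; apply: big1 => q _; exact: sgn_sqr.
Qed.

Lemma perm_ltnNge n (s : 'S_n) (p q : 'I_n) : p != q ->
  ~~ (s p < s q)%N = (s q < s p)%N.
Proof.
move=> npq; have nspq : (s q : nat) != s p.
  by rewrite (inj_eq val_inj) (inj_eq perm_inj) eq_sym.
by rewrite -leqNgt leq_eqVlt (negbTE nspq).
Qed.

Definition inverted n (s : 'S_n) (p q : 'I_n) := (p < q)%N != (s p < s q)%N.

Lemma invertedC n (s : 'S_n) p q : inverted s p q = inverted s q p.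
Proof.
rewrite /inverted; have [pq|qp|/val_inj->] := ltngtP p q => //.
  by rewrite -(perm_ltnNge s (negbT (ltn_eqF pq))); case: (s p < s q)%N.
by rewrite -(perm_ltnNge s (negbT (ltn_eqF qp))); case: (s q < s p)%N.
Qed.

Definition pair_sign n (a : 'I_n -> nat) (s : 'S_n) (p q : 'I_n) : R :=
  if inverted s p q then sgn (a (s p) * a (s q)) else 1.

Lemma koszul_pairs n (a : 'I_n -> nat) s :
  kos a s = \prod_(p : 'I_n) \prod_(q : 'I_n | (p < q)%N) pair_sign a s p q.
Proof.
rewrite /koszul; apply: eq_bigr => p _; rewrite big_mkcondr /=.
apply: eq_bigr => q pq; rewrite /pair_sign /inverted pq /=.
by rewrite (perm_ltnNge s (negbT (ltn_eqF pq))).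
Qed.

Lemma prod_pairs_perm n (F : 'I_n -> 'I_n -> R) (t : 'S_n) :
  (forall p q, F p q = F q p) ->
  \prod_(p : 'I_n) \prod_(q : 'I_n | (p < q)%N) F (t p) (t q) =
  \prod_(p : 'I_n) \prod_(q : 'I_n | (p < q)%N) F p q.
Proof.
move=> FC; rewrite !pair_big_dep /=.
rewrite [RHS](reindex_inj (h := fun pq : 'I_n * 'I_n => (t pq.1, t pq.2))) /=;
  last by move=> [p q] [p' q'] /= [/perm_inj-> /perm_inj->].
rewrite [RHS](bigID (fun pq : 'I_n * 'I_n => (pq.1 < pq.2)%N)) /=.
rewrite [LHS](bigID (fun pq : 'I_n * 'I_n => (t pq.1 < t pq.2)%N)) /=.
congr (_ * _); first by apply: eq_bigl => pq; rewrite andbC.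
rewrite (reindex_inj (h := fun pq : 'I_n * 'I_n => (pq.2, pq.1))) /=;
  last by move=> [p q] [p' q'] /= [-> ->].
apply: eq_big => [[p q]|[p q] _] /=; last exact: FC.
have [pq|qp|/val_inj->] := ltngtP p q; rewrite ?ltnn ?andbF //=.
by rewrite andbT (perm_ltnNge t (negbT (ltn_eqF qp))).
Qed.

Lemma koszulM n (a : 'I_n -> nat) (r s : 'S_n) :
  kos a (r * s) = kos a s * kos (fun i => a (s i)) r.
Proof.
rewrite !koszul_pairs mulrC.
have pairM p q : pair_sign a (r * s) p q =
    pair_sign (fun i => a (s i)) r p q * pair_sign a s (r p) (r q).
  rewrite /pair_sign /inverted !permM.
  case: (p < q)%N; case: (r p < r q)%N; case: (s (r p) < s (r q))%N => /=;
    by rewrite ?mulr1 ?mul1r ?sgn_sqr.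
under eq_bigr do under eq_bigr do rewrite pairM.
under eq_bigr do rewrite big_split /=.
rewrite big_split /=; congr (_ * _).
by apply: prod_pairs_perm => p q; rewrite /pair_sign invertedC mulnC.
Qed.

Lemma koszul1 n (a : 'I_n -> nat) : kos a 1 = 1.
Proof.
apply: big1 => p _; apply: big1 => q /andP[pq].
by rewrite !perm1 ltnNge ltnW.
Qed.

Lemma ltn_lift2 n (j : 'I_n.+1) (x y : 'I_n) :
  (lift j x < lift j y)%N = (x < y)%N.
Proof. by rewrite /= !ltnNge leq_bump2. Qed.

Lemma ltn_lift_l n (j : 'I_n.+1) (x : 'I_n) : (lift j x < j)%N = (x < j)%N.
Proof.
rewrite /= /bump; have [jx|xj] := leqP j x; last by rewrite add0n xj.
by rewrite add1n ltnNge ltnW // ltnNge jx.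
Qed.

(* Koszul sign of the permutation sending position 0 to position j and the
   remaining positions, in the order given by t, to the others: moving the
   element of position j to the front past the elements before it. *)
Lemma koszul_lift_perm n (a : 'I_n.+1 -> nat) (j : 'I_n.+1) (t : 'S_n) :
  kos a (lift_perm ord0 j t) =
  (\prod_(x : 'I_n | (x < j)%N) sgn (a j * a (lift j x)))
    * kos (fun x => a (lift j x)) t.
Proof.
rewrite /koszul big_ord_recl; congr (_ * _).
  rewrite big_mkcond big_ord_recl /= mul1r lift_perm_id.
  rewrite [RHS]big_mkcond [RHS](reindex_inj (@perm_inj _ t)) /=.
  by apply: eq_bigr => q _; rewrite lift_perm_lift ltn_lift_l.
apply: eq_bigr => p _; rewrite big_mkcond big_ord_recl /= mul1r.
rewrite [RHS]big_mkcond; apply: eq_bigr => q _.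
by rewrite !lift_perm_lift ltn_lift2 /bump !add1n ltnS.
Qed.

End KoszulSign.

Lemma perm_lift_ord0 n (s : 'S_n.+1) :
  exists t, s = lift_perm ord0 (s ord0) t.
Proof.
pose u (k : 'I_n) := odflt k (unlift (s ord0) (s (lift ord0 k))).
have uK k : lift (s ord0) (u k) = s (lift ord0 k).
  rewrite /u; have:= neq_lift ord0 k.
  by rewrite -(can_eq (permK s)) => /unlift_some[] ? ? ->.
have u_inj : injective u.
  by move=> k1 k2 e; have := uK k1; rewrite e uK => /perm_inj/lift_inj ->.
exists (perm u_inj); apply/permP => k.
case: (unliftP ord0 k) => [k'|] ->; rewrite ?lift_perm_id //.
by rewrite lift_perm_lift permE uK.
Qed.

Section GradedProducts.
Variables (R : numFieldType) (A : algType R) (D : cforms A).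
Local Notation sgn e := ((-1 : R) ^+ e).
Local Notation kos := (koszul R).
Local Notation hom := (homog D).

Lemma mul_prod_graded (x : A) d (U : nat -> A) (B : nat -> nat) j :
  x \in hom d -> (forall i, U i \in hom (B i)) ->
  x * \prod_(0 <= i < j) U i =
  (\prod_(0 <= i < j) sgn (d * B i)) *: ((\prod_(0 <= i < j) U i) * x).
Proof.
move=> hx hU; elim: j => [|j IH]; first by rewrite !big_nil mulr1 mul1r scale1r.
rewrite !big_nat_recr //= mulrA IH -scalerAl -[_ * x * U j]mulrA.
by rewrite (hom_comm hx (hU j)) -scalerAr scalerA mulrA.
Qed.

Lemma insert_prod n (u : 'I_n.+1 -> A) (b : 'I_n.+1 -> nat) (j : 'I_n.+1) :
  (forall i, u i \in hom (b i)) ->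
  u j * \prod_(i < n) u (lift j i) =
  (\prod_(x : 'I_n | (x < j)%N) sgn (b j * b (lift j x))) *: \prod_(i < n.+1) u i.
Proof.
move=> hu; pose U (i : nat) := u (inord i); pose B (i : nat) := b (inord i).
have hU i : U i \in hom (B i) by apply: hu.
have liftE (i : 'I_n) : lift j i = inord (bump j i).
  by apply: val_inj; rewrite /= inordK //; exact: (ltn_ord (lift j i)).
have jn : (j <= n)%N by rewrite -ltnS.
have -> : \prod_(i < n) u (lift j i) = \prod_(0 <= i < n) U (bump j i).
  by rewrite big_mkord; apply: eq_bigr => i _; rewrite liftE.
have -> : \prod_(i < n.+1) u i = \prod_(0 <= i < n.+1) U i.
  by rewrite big_mkord; apply: eq_bigr => i _; rewrite /U inord_val.
rewrite (big_cat_nat (leq0n j) jn) (big_cat_nat (leq0n j) (leqW jn)) /=.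
rewrite (big_ltn (ltn_ord j)) big_add1 /=.
have -> : \prod_(0 <= i < j) U (bump j i) = \prod_(0 <= i < j) U i.
  by apply: eq_big_nat => i /andP[_ ij]; rewrite /bump leqNgt ij add0n.
have -> : \prod_(j <= i < n) U (bump j i) = \prod_(j <= i < n) U i.+1.
  by apply: eq_big_nat => i /andP[ji _]; rewrite /bump ji add1n.
have -> : u j = U j by rewrite /U inord_val.
rewrite mulrA (mul_prod_graded j (hU j) hU) -scalerAl -!mulrA.
congr (_ *: _).
rewrite (big_ord_narrow (F := fun x : 'I_n => sgn (b j * b (lift j x)))) //.
rewrite big_mkord; apply: eq_bigr => i _; rewrite /B inord_val liftE.
by rewrite /= /bump leqNgt ltn_ord add0n.
Qed.

Lemma prod_perm_koszul N (u : 'I_N -> A) (b : 'I_N -> nat) :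
  (forall i, u i \in hom (b i)) ->
  forall s : 'S_N, \prod_i u (s i) = kos b s *: \prod_i u i.
Proof.
elim: N u b => [|n IH] u b hu s.
  by rewrite !big_ord0 /koszul big_ord0 scale1r.
have [t ->] := perm_lift_ord0 s; set j := s ord0.
rewrite koszul_lift_perm big_ord_recl lift_perm_id.
rewrite (eq_bigr (fun i => u (lift j (t i)))); last by move=> i _; rewrite lift_perm_lift.
rewrite (IH (fun i => u (lift j i)) (fun i => b (lift j i))) //.
by rewrite -scalerAr (insert_prod (b := b)) // scalerA mulrC.
Qed.

Definition subst_prod N (i : 'I_N) (x : A) (u : 'I_N -> A) :=
  \prod_(p < N) (if p == i then x else u p).

Lemma lift_eqF n (h : 'I_n) (i : 'I_n.-1) : (lift h i == h) = false.
Proof. by apply/negbTE; rewrite eq_sym neq_lift. Qed.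

Lemma subst_prod_lin N i (c : R) x y u :
  @subst_prod N i (c *: x + y) u = c *: subst_prod i x u + subst_prod i y u.
Proof.
elim: N i u => [|N IH] i u; first by case: i.
rewrite /subst_prod !big_ord_recl.
case: (unliftP ord0 i) => [i'|] ->.
  have -> : (ord0 == lift ord0 i') = false by [].
  have E z : \prod_(q < N) (if lift ord0 q == lift ord0 i' then z else u (lift ord0 q))
     = subst_prod i' z (fun q => u (lift ord0 q)).
    by apply: eq_bigr => q _; rewrite (inj_eq lift_inj).
  by rewrite !E IH mulrDr scalerAr.
by rewrite eqxx mulrDl -scalerAl.
Qed.

Lemma subst_prodD N i x y u :
  @subst_prod N i (x + y) u = subst_prod i x u + subst_prod i y u.
Proof. by have := subst_prod_lin i 1 x y u; rewrite !scale1r. Qed.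

Lemma subst_prodZ N i (c : R) x u :
  @subst_prod N i (c *: x) u = c *: subst_prod i x u.
Proof.
have := subst_prod_lin i (-1) 0 0 u; rewrite scaler0 addr0 scaleN1r addNr => S0.
by rewrite -[c *: x]addr0 subst_prod_lin S0 addr0.
Qed.

Lemma leibniz_prod (dl : A -> A) :
  (forall p x y, x \in hom p -> dl (x * y) = dl x * y + sgn p *: (x * dl y)) ->
  forall N (u : 'I_N -> A) (b : 'I_N -> nat), (forall i, u i \in hom (b i)) ->
  dl (\prod_i u i) =
  \sum_(i < N) sgn (\sum_(p < N | (p < i)%N) b p) *: subst_prod i (dl (u i)) u.
Proof.
move=> hL; have dl1 : dl 1 = 0.
  have := hL 0%N 1 1 (hom1 D); rewrite !mulr1 expr0 scale1r mul1r => h.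
  by have := congr1 (fun z => z - dl 1) h; rewrite /= subrr addrK => <-.
elim=> [|N IH] u b hu; first by rewrite !big_ord0.
rewrite big_ord_recl (hL _ _ _ (hu ord0)) (IH _ (fun i => b (lift ord0 i))) //.
rewrite big_ord_recl /subst_prod big_ord_recl eqxx /=.
have -> : \sum_(p < N.+1 | (p < 0)%N) b p = 0%N by rewrite big_pred0.
rewrite expr0 scale1r.
congr (_ * _ + _); rewrite mulr_sumr scaler_sumr; apply: eq_bigr => i _.
rewrite big_ord_recl /= [\sum_(p < N.+1 | _) _]big_mkcond big_ord_recl /=.
by rewrite -big_mkcond /= exprD -scalerA -scalerAr.
Qed.

Lemma dtotZ (c : R) x : dtot D (c *: x) = c *: dtot D x.
Proof. by rewrite /dtot !linearZ scalerDr. Qed.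

Lemma dtot_sum (I : finType) (F : I -> A) : dtot D (\sum_i F i) = \sum_i dtot D (F i).
Proof. by rewrite /dtot !raddf_sum -big_split. Qed.

Lemma dtot_del x : dtot D (del D x) = delb D (del D x).
Proof. by rewrite /dtot del_del add0r. Qed.

Lemma dtot_delb x : dtot D (delb D x) = - delb D (del D x).
Proof. by rewrite /dtot delb_delb addr0; apply/eqP; rewrite -addr_eq0 del_delb. Qed.

End GradedProducts.

Section AltCalculus.
Variables (R : numFieldType) (A : algType R) (D : cforms A) (N : nat).
Local Notation kos := (koszul R).
Local Notation hom := (homog D).
Implicit Types (F G : ('I_N -> nat) -> ('I_N -> A) -> A) (k : 'I_N -> nat).

Lemma Alt_ext F G k f :
  (forall s : 'S_N, F (fun i => k (s i)) (fun i => f (s i)) =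
                    G (fun i => k (s i)) (fun i => f (s i))) ->
  Alt F k f = Alt G k f.
Proof. by move=> FG; apply: eq_bigr => s _; rewrite FG. Qed.

Lemma eq_Alt F G k f : (forall k' f', F k' f' = G k' f') -> Alt F k f = Alt G k f.
Proof. by move=> FG; apply: Alt_ext => s; rewrite FG. Qed.

Lemma AltD F G k f :
  Alt (fun k' f' => F k' f' + G k' f') k f = Alt F k f + Alt G k f.
Proof. by rewrite /Alt -big_split; apply: eq_bigr => s _; rewrite scalerDr. Qed.

Lemma AltZ (c : R) F k f : Alt (fun k' f' => c *: F k' f') k f = c *: Alt F k f.
Proof.
by rewrite /Alt scaler_sumr; apply: eq_bigr => s _; rewrite !scalerA mulrC.
Qed.

Lemma Alt_sum (I : finType) (P : pred I)
    (F : I -> ('I_N -> nat) -> ('I_N -> A) -> A) k f :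
  Alt (fun k' f' => \sum_(i | P i) F i k' f') k f = \sum_(i | P i) Alt (F i) k f.
Proof.
rewrite /Alt exchange_big; apply: eq_bigr => s _.
by rewrite scaler_sumr.
Qed.

Lemma dtot_Alt F k f : dtot D (Alt F k f) = Alt (fun k' f' => dtot D (F k' f')) k f.
Proof.
by rewrite /Alt {1}/dtot !raddf_sum -big_split; apply: eq_bigr => s _ /=; rewrite -dtotZ.
Qed.

Lemma Alt_perm (c : 'S_N) F G k f :
  (forall s : 'S_N, G (fun i => k (s i)) (fun i => f (s i)) =
     kos (fun i => (k (s i)).+1) c *:
       F (fun i => k ((c * s)%g i)) (fun i => f ((c * s)%g i))) ->
  Alt G k f = Alt F k f.
Proof.
move=> GF; rewrite /Alt [RHS](reindex_inj (mulgI c)); apply: eq_bigr => s _.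
by rewrite GF koszulM scalerA.
Qed.

(* Alternating the product of the images of the arguments under an operator
   raising the degree by one gives (N! times) the product itself: the Koszul
   sign of the alternation cancels the one of graded commutativity. *)
Lemma Alt_prod_shift (U : A -> A) k f :
  (forall d x, x \in hom d -> U x \in hom d.+1) ->
  (forall i, f i \in hom (k i)) ->
  Alt (fun _ g => \prod_i U (g i)) k f = N`!%:R *: \prod_i U (f i).
Proof.
move=> hU hf; have hUf i : U (f i) \in hom (k i).+1 by exact: hU.
transitivity (\sum_(s : 'S_N) \prod_i U (f i)); last first.
  by rewrite sumr_const card_Sn scaler_nat.
apply: eq_bigr => s _.
by rewrite (prod_perm_koszul hUf) scalerA koszul_sqr scale1r.
Qed.

End AltCalculus.

Lemma telescope_sign (R : pzRingType) (V : lmodType R) (g : nat -> V) m :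
  \sum_(j < m) (-1) ^+ j *: (g j.+1 + g j) = g 0%N - (-1) ^+ m *: g m.
Proof.
elim: m => [|m IH]; first by rewrite big_ord0 expr0 scale1r subrr.
rewrite big_ord_recr /= IH scalerDr exprS mulN1r scaleNr opprK.
by rewrite addrCA subrK addrC.
Qed.

Section DOmega.
Variables (R : numFieldType) (A : algType R) (D : cforms A) (n : nat).
Local Notation sgn e := ((-1 : R) ^+ e).
Local Notation kos := (koszul R).
Local Notation hom := (homog D).
Local Notation N := n.+2.

Definition slot_op (j : nat) (p : 'I_N) (x : A) :=
  if p == ord0 then x else if (p <= j)%N then del D x else delb D x.

Definition slot_deg (ka : 'I_N -> nat) (p : 'I_N) :=
  if p == ord0 then ka p else (ka p).+1.

Definition wordP (j : nat) (f : 'I_N -> A) :=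
  \prod_(p < N) (if (p < j)%N then del D (f p) else delb D (f p)).

Definition wordQ (j : nat) (f : 'I_N -> A) :=
  subst_prod ord0 (delb D (f ord0)) (fun p => slot_op j p (f p)).

Definition wordL (i : 'I_N) (j : nat) (f : 'I_N -> A) :=
  subst_prod i (delb D (del D (f i))) (fun p => slot_op j p (f p)).

(* The sign of wordL i j in d (omega_term j): the Leibniz sign of slot i
   times the sign relating d del, resp. d delb, to delb del. *)
Definition interior_sign (ka : 'I_N -> nat) (i : 'I_N) (j : nat) : R :=
  sgn (\sum_(p < N | (p < i)%N) slot_deg ka p) * (if (i <= j)%N then 1 else -1).

Lemma dtot_slot_op j (p : 'I_N) x : p != ord0 ->
  dtot D (slot_op j p x) = (if (p <= j)%N then 1 else -1) *: delb D (del D x).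
Proof.
rewrite /slot_op => /negbTE ->.
by case: (p <= j)%N; rewrite ?dtot_del ?dtot_delb ?scale1r ?scaleN1r.
Qed.

Lemma d_omega_term (ka : 'I_N -> nat) (f : 'I_N -> A) j :
  (forall i, f i \in hom (ka i)) ->
  dtot D (omega_term D j f) = wordP j.+1 f + wordQ j f +
    \sum_(i < N | i != ord0) interior_sign ka i j *: wordL i j f.
Proof.
move=> hf; have hslot p : slot_op j p (f p) \in hom (slot_deg ka p).
  rewrite /slot_op /slot_deg; case: (p == ord0) => //.
  by case: (p <= j)%N; [apply: del_hom | apply: delb_hom].
have -> : omega_term D j f = \prod_p slot_op j p (f p) by [].
rewrite /dtot (leibniz_prod (del_leibniz (c:=D)) hslot).
rewrite (leibniz_prod (delb_leibniz (c:=D)) hslot) -big_split /= (bigD1 ord0) //=.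
rewrite big_pred0 // expr0 !scale1r; congr (_ + _).
  congr (_ + _); apply: eq_bigr => p _; rewrite /slot_op.
  by case: (p =P ord0) => [->|/eqP np] //=; rewrite ltnS.
apply: eq_bigr => i ni; rewrite -scalerDr -subst_prodD.
by rewrite -[_ + _]/(dtot D _) dtot_slot_op // subst_prodZ scalerA.
Qed.

(* The word of omega_(m-1) that wordL i j becomes once the factor
   delb (del (f i)) is moved to the front, with its sign in the alternation
   of delb (del f_0) * omega_(m-1). *)
Definition front_word (j' : nat) (ka : 'I_N -> nat) (f : 'I_N -> A) :=
  sgn (ka ord0) *: (sgn j' *:
    (delb D (del D (f ord0)) * omega_term D j' (fun q : 'I_n.+1 => f (lift ord0 q)))).

(* The number of del's in front_word, coming from wordL i j: removing slot i
   leaves j - 1 del's if i <= j and j of them otherwise. *)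
Definition jdrop (i : 'I_N) (j : nat) := if (i <= j)%N then j.-1 else j.

Definition wordL_deg (ka : 'I_N -> nat) (i p : 'I_N) :=
  if p == i then (ka p).+2 else slot_deg ka p.

Lemma lift_eq0 (i : 'I_N) (y : 'I_n.+1) : (0 < i)%N ->
  (lift i y == ord0) = (y == ord0).
Proof.
move=> ipos; apply/eqP/eqP => [e|->]; last first.
  by apply: val_inj; rewrite /= /bump leqNgt ipos.
apply: val_inj; move: (congr1 val e); rewrite /= /bump.
by case: (i <= y)%N; rewrite ?add1n ?add0n.
Qed.

Lemma lift_le_jdrop (i : 'I_N) (q : 'I_n.+1) (j : nat) : (0 < i)%N ->
  (lift i q <= j)%N = (q <= jdrop i j)%N.
Proof.
move=> ipos; rewrite /= /bump /jdrop.
have [iq|qi] := leqP i q; have [ij|ji] := leqP i j.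
- case: j ij => [|j] ij; first by move: (leq_trans ipos ij).
  by rewrite add1n ltnS.
- have jq : (j < q)%N := leq_trans ji iq.
  by rewrite add1n ltnNge ltnW // leqNgt jq.
- have qj : (q < j)%N := leq_trans qi ij.
  case: j ij qj => [|j] ij qj //=; rewrite -[(q <= j)%N]ltnS qj; exact: ltnW.
- by [].
Qed.

Lemma sum_lt_lift (F : 'I_N -> nat) (i : 'I_N) :
  (\sum_(p < N | (p < i)%N) F p = \sum_(y < n.+1 | (y < i)%N) F (lift i y))%N.
Proof.
have i_le : (i <= n.+1)%N by rewrite -ltnS.
rewrite (big_ord_narrow (ltnW (ltn_ord i))) (big_ord_narrow i_le).
by apply: eq_bigr => y _; congr F; apply: val_inj; rewrite /= /bump leqNgt ltn_ord.
Qed.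

Lemma koszul_front_sign (ka : 'I_N -> nat) (i : 'I_N) : i != ord0 ->
  kos (fun p => (ka p).+1) (lift_perm ord0 i 1) *
    kos (wordL_deg ka i) (lift_perm ord0 i 1)
  = - (sgn (ka i) * sgn (\sum_(p < N | (p < i)%N) slot_deg ka p)).
Proof.
move=> i0; have ipos : (0 < i)%N by rewrite lt0n.
rewrite !koszul_lift_perm !koszul1 !mulr1 -big_split /=.
have pair (y : 'I_n.+1) :
    sgn ((ka i).+1 * (ka (lift i y)).+1) *
      sgn (wordL_deg ka i i * wordL_deg ka i (lift i y))
    = sgn (slot_deg ka (lift i y)) * (if y == ord0 then sgn (ka i).+1 else 1).
  rewrite /wordL_deg /slot_deg eqxx lift_eqF lift_eq0 //.
  move: (ka i) (ka (lift i y)) => a b; case: (y == ord0); rewrite ?mulr1 -!exprD;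
    apply: sgn_odd_eq; rewrite /= !oddD !oddM /=; by case: (odd a); case: (odd b).
rewrite (eq_bigr _ (fun y _ => pair y)) big_split /= prodrXr -sum_lt_lift.
have -> : \prod_(y < n.+1 | (y < i)%N) (if y == ord0 then sgn (ka i).+1 else 1)
    = sgn (ka i).+1.
  by rewrite (bigD1 ord0) //= big1 ?mulr1 // => y /andP[_ /negbTE ->].
by rewrite exprS mulN1r mulrN mulrC.
Qed.

Lemma jdrop_sign (i : 'I_N) j : i != ord0 ->
  - sgn (jdrop i j) = sgn j * (if (i <= j)%N then 1 else -1).
Proof.
move=> i0; rewrite /jdrop; have [ij|_] := leqP; last by rewrite mulrN1.
have : (0 < j)%N by apply: leq_trans ij; rewrite lt0n.
by case: j {ij} => // j _; rewrite mulr1 exprS mulN1r.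
Qed.

Variables (k : 'I_N -> nat) (phi : 'I_N -> A).
Hypothesis hphi : forall i, phi i \in hom (k i).

(* Under alternation wordQ j and wordP j agree: moving slot 0 of wordQ j
   behind the j following slots turns it into wordP j. *)
Lemma Alt_wordQ (j : 'I_N) :
  Alt (fun _ f => wordP j f) k phi = Alt (fun _ f => wordQ j f) k phi.
Proof.
apply: (Alt_perm (c := lift_perm ord0 j 1)) => s; set c := lift_perm _ _ _.
pose u (p : 'I_N) := if (p < j)%N then del D (phi (s p)) else delb D (phi (s p)).
have hu p : u p \in hom (k (s p)).+1.
  by rewrite /u; case: (p < j)%N; [apply: del_hom | apply: delb_hom].
have -> : wordQ j (fun p => phi ((c * s)%g p)) = \prod_p u (c p).
  rewrite /wordQ /subst_prod big_ord_recl [RHS]big_ord_recl; congr (_ * _).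
    by rewrite /u permM lift_perm_id ltnn.
  apply: eq_bigr => q _; rewrite /u permM lift_perm_lift perm1 ltn_lift_l /=.
  by rewrite /slot_op /= /bump add1n.
by rewrite (prod_perm_koszul hu) scalerA koszul_sqr scale1r.
Qed.

(* The terms of d omega coming from slot 0 telescope to the two extreme
   words: all del and all delb. *)
Lemma Alt_boundary :
  Alt (fun _ f => \sum_(j < N) sgn j *: (wordP j.+1 f + wordQ j f)) k phi =
  N`!%:R *: (sgn n.+1 *: \prod_(i < N) del D (phi i) + \prod_(i < N) delb D (phi i)).
Proof.
rewrite Alt_sum; under eq_bigr => j _ do rewrite AltZ AltD -Alt_wordQ.
rewrite (telescope_sign (fun j => Alt (fun _ f => wordP j f) k phi)).
have -> : Alt (fun _ f => wordP 0 f) k phi = Alt (fun _ f => \prod_i delb D (f i)) k phi.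
  exact: eq_Alt.
have -> : Alt (fun _ f => wordP N f) k phi = Alt (fun _ f => \prod_i del D (f i)) k phi.
  by apply: eq_Alt => _ f; apply: eq_bigr => p _; rewrite ltn_ord.
rewrite (Alt_prod_shift (delb_hom (c:=D)) hphi) (Alt_prod_shift (del_hom (c:=D)) hphi).
by rewrite exprS mulN1r scaleNr opprK scalerDr addrC !scalerA mulrC.
Qed.

(* Moving the factor delb (del f_i) of wordL i j to the front turns it, under
   alternation, into front_word (jdrop i j). *)
Lemma Alt_wordL (i : 'I_N) (j : nat) : i != ord0 ->
  Alt (fun ka f => sgn j *: (interior_sign ka i j *: wordL i j f)) k phi =
  Alt (front_word (jdrop i j)) k phi.
Proof.
move=> i0; have ipos : (0 < i)%N by rewrite lt0n.
apply: (Alt_perm (c := lift_perm ord0 i 1)) => s; set c := lift_perm _ _ _.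
pose ka p := k (s p).
pose u (p : 'I_N) :=
  if p == i then delb D (del D (phi (s p))) else slot_op j p (phi (s p)).
have hu p : u p \in hom (wordL_deg ka i p).
  rewrite /u /wordL_deg /slot_deg /slot_op; case: (p == i).
    by apply: delb_hom; apply: del_hom.
  by case: (p == ord0) => //; case: (p <= j)%N; [apply: del_hom | apply: delb_hom].
have u_front : delb D (del D (phi ((c * s)%g ord0))) *
    omega_term D (jdrop i j) (fun q => phi ((c * s)%g (lift ord0 q))) = \prod_p u (c p).
  rewrite /omega_term [RHS]big_ord_recl; congr (_ * _).
    by rewrite /u !permM lift_perm_id eqxx.
  apply: eq_bigr => q _; rewrite /u !permM lift_perm_lift perm1 lift_eqF /slot_op.
  by rewrite lift_eq0 // lift_le_jdrop.
have u_wordL : \prod_p u p = wordL i j (fun p => phi (s p)).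
  by apply: eq_bigr => p _; rewrite /u; case: (p =P i) => [->|].
rewrite /front_word u_front (prod_perm_koszul hu) u_wordL permM lift_perm_id.
rewrite !scalerA; congr (_ *: _).
rewrite /interior_sign mulrCA -(jdrop_sign j i0).
transitivity (kos (fun p => (ka p).+1) c * kos (wordL_deg ka i) c *
              (sgn (ka i) * sgn (jdrop i j))); last by ring.
rewrite (koszul_front_sign ka i0) mulNr mulrACA sgn_sqr mul1r.
by rewrite mulrN.
Qed.

Lemma sum_jdrop (V : nmodType) (Z : nat -> V) :
  \sum_(i < N | i != ord0) \sum_(j < N) Z (jdrop i j) = (\sum_(j' < n.+1) Z j') *+ N.
Proof.
rewrite big_mkcond big_ord_recl /= add0r.
have inner (q : 'I_n.+1) :
    \sum_(j < N) Z (jdrop (lift ord0 q) j) = \sum_(j' < n.+1) Z j' + Z q.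
  rewrite /jdrop /= /bump /= add1n.
  rewrite -(big_mkord xpredT (fun j => Z (if (q < j)%N then j.-1 else j))).
  rewrite -(big_mkord xpredT Z) (big_cat_nat (leq0n q.+1) (leqW (ltn_ord q))) /=.
  rewrite (big_cat_nat (leq0n q) (ltnW (ltn_ord q))) /= big_add1 /= big_nat_recr //=.
  rewrite (eq_big_nat _ _ (F1 := fun j => Z (if (q < j)%N then j.-1 else j)) (F2 := Z));
    last by move=> j /andP[_ jq]; rewrite ltnNge ltnW.
  rewrite (eq_big_nat _ _ (F1 := fun j => Z (if (q < j.+1)%N then j else j.+1)) (F2 := Z));
    last by move=> j /andP[qj _]; rewrite ltnS qj.
  by rewrite ltnn addrAC.
under eq_bigr do rewrite inner.
by rewrite big_split /= sumr_const card_ord -mulrSr.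
Qed.

Lemma Alt_interior :
  Alt (fun ka f => \sum_(j < N) sgn j *:
        \sum_(i < N | i != ord0) interior_sign ka i j *: wordL i j f) k phi
  = (\sum_(j' < n.+1) Alt (front_word j') k phi) *+ N.
Proof.
under eq_Alt do under eq_bigr do rewrite scaler_sumr.
rewrite Alt_sum; under eq_bigr do rewrite Alt_sum.
rewrite exchange_big /= -(sum_jdrop (fun j => Alt (front_word j) k phi)).
apply: eq_bigr => i i0.
by apply: eq_bigr => j _; rewrite Alt_wordL.
Qed.

Lemma omega_term_ext m j (g1 g2 : 'I_m.+1 -> A) :
  (forall q, g1 q = g2 q) -> omega_term D j g1 = omega_term D j g2.
Proof. by move=> e; apply: eq_bigr => q _; rewrite e. Qed.

(* The alternation of delb (del f_0) * omega_(m-1)(f_1, ..., f_m): the inner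
   alternation over the permutations fixing slot 0 is absorbed by the outer
   one, leaving the sum of the front words. *)
Lemma Alt_collapse :
  Alt (fun ka f => sgn (ka ord0) *: (delb D (del D (f ord0)) *
        omega D (fun q : 'I_n.+1 => ka (lift ord0 q)) (fun q => f (lift ord0 q)))) k phi
  = \sum_(j' < n.+1) Alt (front_word j') k phi.
Proof.
pose W (g : 'I_n.+1 -> A) := \sum_(j' < n.+1) sgn j' *: omega_term D j' g.
pose H (ka : 'I_N -> nat) (f : 'I_N -> A) :=
  sgn (ka ord0) *: (delb D (del D (f ord0)) * W (fun q => f (lift ord0 q))).
have -> : \sum_(j' < n.+1) Alt (front_word j') k phi = Alt H k phi.
  rewrite -Alt_sum; apply: eq_Alt => ka f.
  rewrite /H /W mulr_sumr scaler_sumr.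
  by apply: eq_bigr => j' _; rewrite /front_word scalerAr.
pose G (t : 'S_n.+1) (ka : 'I_N -> nat) (f : 'I_N -> A) :=
  kos (fun q => (ka (lift ord0 q)).+1) t *:
    (sgn (ka ord0) *: (delb D (del D (f ord0)) * W (fun q => f (lift ord0 (t q))))).
have G_H t : Alt (G t) k phi = Alt H k phi.
  apply: (Alt_perm (c := lift_perm ord0 ord0 t)) => s.
  rewrite koszul_lift_perm big1 ?mul1r //; congr (_ *: _).
  rewrite /H !permM lift_perm_id; congr (_ *: (_ * _)).
  by apply: eq_bigr => j' _; congr (_ *: _); apply: omega_term_ext => q;
    rewrite permM lift_perm_lift.
transitivity (((n.+1)`!%:R)^-1 *: \sum_(t : 'S_n.+1) Alt (G t) k phi).
  rewrite -Alt_sum -AltZ; apply: eq_Alt => ka f.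
  rewrite /omega /Alt -!scalerAr scalerA mulrC -scalerA mulr_sumr !scaler_sumr.
  by apply: eq_bigr => t _; rewrite /G -scalerAr !scalerA mulrAC.
under eq_bigr do rewrite G_H.
rewrite sumr_const card_Sn -scaler_nat scalerA mulVf ?scale1r //.
by rewrite pnatr_eq0 -lt0n fact_gt0.
Qed.

Lemma d_omega_expand :
  dtot D (omega D k phi) = (N`!%:R)^-1 *:
    (Alt (fun _ f => \sum_(j < N) sgn j *: (wordP j.+1 f + wordQ j f)) k phi
     + Alt (fun ka f => \sum_(j < N) sgn j *:
              \sum_(i < N | i != ord0) interior_sign ka i j *: wordL i j f) k phi).
Proof.
rewrite /omega dtotZ dtot_Alt -AltD; congr (_ *: _); apply: Alt_ext => s.
rewrite dtot_sum -big_split; apply: eq_bigr => j _ /=.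
by rewrite dtotZ (d_omega_term j (fun p => hphi (s p))) -scalerDr.
Qed.

End DOmega.

Unset Implicit Arguments.

Theorem lemma2p1 (R : numFieldType) (A : algType R) (D : cforms A) (n : nat)
    (k : 'I_n.+2 -> nat) (phi : 'I_n.+2 -> A)
    (hphi : forall i, phi i \in homog D (k i)) :
  dtot D (omega D k phi) =
    (-1) ^+ n.+1 *: (\prod_(i < n.+2) del D (phi i))
    + \prod_(i < n.+2) delb D (phi i)
    + ((n.+1)`!%:R)^-1 *:
        Alt (fun k' f =>
               (-1) ^+ (k' ord0) *:
                 (delb D (del D (f ord0)) *
                  omega D (fun i : 'I_n.+1 => k' (lift ord0 i))
                          (fun i : 'I_n.+1 => f (lift ord0 i))))
            k phi.
Proof.
have fact_neq0 m : (m`!)%:R != 0 :> R by rewrite pnatr_eq0 -lt0n fact_gt0.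
rewrite (d_omega_expand hphi) (Alt_boundary hphi) (Alt_interior hphi) Alt_collapse.
rewrite scalerDr scalerA mulVf // scale1r; congr (_ + _).
(* (m+1) / (m+1)! = 1 / m! *)
by rewrite -scaler_nat scalerA factS natrM invfM mulrAC mulVf ?mul1r // pnatr_eq0.
Qed.
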